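(* For every natural number $n\geq 1$ there is a complete theory $T_n$ with ${\rm ar}(T_n)=n$.
   Context: For $n\geq 1$, a formula $\varphi(\overline{x})$ of a complete theory $T$ is $n$-ary if it is $T$-equivalent to a Boolean combination of $T$-formulas each of which has at most $n$ free variables. $T$ is unary ($1$-ary) if every $T$-formula is $T$-equivalent to a Boolean combination of $T$-formulas with one free variable and formulas of the form $x\approx y$; for $n\geq 2$, $T$ is $n$-ary if every $T$-formula is $n$-ary; $T$ is $0$-ary if every formula is $T$-equivalent to a sentence. The arity ${\rm ar}(T)$ is the number $n$ such that $T$ is $n$-ary and not $(n-1)$-ary, and ${\rm ar}(T)=\infty$ if $T$ is $n$-ary for no $n$. *)

From mathcomp Require Import all_boot.
Set Implicit Arguments. Unset Strict Implicit. Unset Printing Implicit Defensive.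

(* A first-order signature: function symbols and relation symbols with arities
   (constants are 0-ary function symbols). *)
Record signature := Signature {
  func : Type; func_ar : func -> nat;
  rel  : Type; rel_ar  : rel -> nat }.

Section Syntax.
Variable L : signature.

Inductive term : Type :=
  | tvar : nat -> term
  | tapp : forall f : func L, ('I_(func_ar f) -> term) -> term.

Inductive formula : Type :=
  | fFalse : formula
  | fTrue  : formula
  | fEq    : term -> term -> formula
  | fRel   : forall r : rel L, ('I_(rel_ar r) -> term) -> formula
  | fNot   : formula -> formula
  | fAnd   : formula -> formula -> formula
  | fOr    : formula -> formula -> formula
  | fImp   : formula -> formula -> formula
  | fIff   : formula -> formula -> formula
  | fEx    : nat -> formula -> formula
  | fAll   : nat -> formula -> formula.

Fixpoint tvars (t : term) : seq nat :=
  match t with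
  | tvar v => [:: v]
  | tapp f args => flatten [seq tvars (args i) | i <- enum 'I_(func_ar f)]
  end.

Fixpoint fv (p : formula) : seq nat :=
  match p with
  | fFalse | fTrue => [::]
  | fEq t1 t2 => tvars t1 ++ tvars t2
  | fRel r args => flatten [seq tvars (args i) | i <- enum 'I_(rel_ar r)]
  | fNot p => fv p
  | fAnd p q | fOr p q | fImp p q | fIff p q => fv p ++ fv q
  | fEx v p | fAll v p => [seq x <- fv p | x != v]
  end.

Definition nfv (p : formula) : nat := size (undup (fv p)).

Definition sentence (p : formula) : Prop := fv p = [::].

Inductive bool_comb (S : formula -> Prop) : formula -> Prop :=
  | bc_base p : S p -> bool_comb S p
  | bc_False : bool_comb S fFalse
  | bc_True  : bool_comb S fTrue
  | bc_Not p : bool_comb S p -> bool_comb S (fNot p)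
  | bc_And p q : bool_comb S p -> bool_comb S q -> bool_comb S (fAnd p q)
  | bc_Or  p q : bool_comb S p -> bool_comb S q -> bool_comb S (fOr p q)
  | bc_Imp p q : bool_comb S p -> bool_comb S q -> bool_comb S (fImp p q)
  | bc_Iff p q : bool_comb S p -> bool_comb S q -> bool_comb S (fIff p q).

End Syntax.

Arguments tvar {L}.
Arguments fFalse {L}.
Arguments fTrue {L}.

(* L-structures (nonempty domain) *)
Record structure (L : signature) := Structure {
  dom :> Type;
  dom_elt : dom;
  interp_func : forall f : func L, ('I_(func_ar f) -> dom) -> dom;
  interp_rel  : forall r : rel L, ('I_(rel_ar r) -> dom) -> Prop }.

Arguments interp_func {L} s f : rename.
Arguments interp_rel {L} s r : rename.

Section Semantics.
Variables (L : signature) (M : structure L).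

Definition update (s : nat -> M) (v : nat) (a : M) : nat -> M :=
  fun x => if x == v then a else s x.

Fixpoint teval (s : nat -> M) (t : term L) : M :=
  match t with
  | tvar v => s v
  | tapp f args => interp_func M f (fun i => teval s (args i))
  end.

Fixpoint sat (s : nat -> M) (p : formula L) : Prop :=
  match p with
  | fFalse => False
  | fTrue => True
  | fEq t1 t2 => teval s t1 = teval s t2
  | fRel r args => interp_rel M r (fun i => teval s (args i))
  | fNot p => ~ sat s p
  | fAnd p q => sat s p /\ sat s q
  | fOr p q => sat s p \/ sat s q
  | fImp p q => sat s p -> sat s q
  | fIff p q => sat s p <-> sat s q
  | fEx v p => exists a : M, sat (update s v a) p
  | fAll v p => forall a : M, sat (update s v a) p
  end.

End Semantics.

Definition theory (L : signature) := formula L -> Prop.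

Definition is_model (L : signature) (T : theory L) (M : structure L) : Prop :=
  forall p, T p -> forall s : nat -> M, sat s p.

(* semantic consequence T |= p (equivalent to provability by Goedel's
   completeness theorem) *)
Definition entails (L : signature) (T : theory L) (p : formula L) : Prop :=
  forall M : structure L, is_model T M -> forall s : nat -> M, sat s p.

Definition complete_theory (L : signature) (T : theory L) : Prop :=
  (forall p, T p -> sentence p) /\
  (exists M : structure L, is_model T M) /\
  (forall p, sentence p -> entails T p \/ entails T (fNot p)).

Definition T_equiv (L : signature) (T : theory L) (p q : formula L) : Prop :=
  entails T (fIff p q).

Definition var_eq (L : signature) (p : formula L) : Prop :=
  exists x y : nat, p = fEq (tvar x) (tvar y).

Definition nary_formula (L : signature) (T : theory L) (n : nat) (p : formula L) : Prop :=
  exists q, bool_comb (fun r => nfv r <= n) q /\ T_equiv T p q.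

Definition nary_theory (L : signature) (T : theory L) (n : nat) : Prop :=
  match n with
  | 0 => forall p : formula L, exists q, sentence q /\ T_equiv T p q
  | 1 => forall p : formula L, exists q,
           bool_comb (fun r => nfv r <= 1 \/ var_eq r) q /\ T_equiv T p q
  | _ => forall p : formula L, nary_formula T n p
  end.

Definition arity_is (L : signature) (T : theory L) (n : nat) : Prop :=
  nary_theory T n /\
  match n with 0 => True | m.+1 => ~ nary_theory T m end.

(* Let N = n + 1. On the 2N points (b, i), b : bool, i : 'I_N, the group of flips of an
   even set of columns acts, and the language names every N-ary relation invariant under
   it. Even flips are automorphisms, so the truth of a formula at a tuple depends only on
   the orbit of the tuple. That orbit is determined by the orbits of the N-element
   subtuples: the flip is forced column by column, and its parity is constrained only when
   all N columns occur, which N coordinates already witness. Hence every formula is a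
   Boolean combination of N-ary atoms. Conversely, the tuple (false, 0), ..., (false, n)
   and its image under the odd flip of column 0 lie in different orbits, yet any n of their
   coordinates miss some column c, and the even flip of columns 0 and c maps the one to
   the other there; so neither formulas in at most n variables nor equations separate
   them. *)

From Stdlib Require Import Classical FunctionalExtensionality.
From mathcomp Require Import all_boot.
Set Implicit Arguments. Unset Strict Implicit. Unset Printing Implicit Defensive.

Section Coincidence.
Variables (L : signature) (M : structure L).
Implicit Types (s : nat -> M) (p : formula L).

Lemma teval_coinc s s' (t : term L) :
  {in tvars t, s =1 s'} -> teval s t = teval s' t.
Proof.
elim: t => [v|f args IH] /= eq_ss'; first by apply: eq_ss'; rewrite inE.
congr interp_func; apply: functional_extensionality => i; apply: IH => v vi.
by apply: eq_ss'; apply/flatten_mapP; exists i; rewrite ?mem_enum.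
Qed.

Lemma eq_in_update (xs : seq nat) v s s' :
  {in [seq x <- xs | x != v], s =1 s'} -> forall a, {in xs, update s v a =1 update s' v a}.
Proof.
move=> eq_ss' a x x_xs; rewrite /update; case: eqP => // /eqP xv.
by apply: eq_ss'; rewrite mem_filter xv.
Qed.

Lemma sat_coinc p s s' : {in fv p, s =1 s'} -> sat s p <-> sat s' p.
Proof.
elim: p s s' => //= [t1 t2|r args|p IH|p IHp q IHq|p IHp q IHq|p IHp q IHq
                    |p IHp q IHq|v p IH|v p IH] s s' eq_ss'.
- by rewrite !(@teval_coinc s s') // => x x_t; apply: eq_ss'; rewrite mem_cat x_t ?orbT.
- suff -> : (fun i => teval s (args i)) = (fun i => teval s' (args i)) by [].
  apply: functional_extensionality => i; apply: teval_coinc => x xi.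
  by apply: eq_ss'; apply/flatten_mapP; exists i; rewrite ?mem_enum.
- by rewrite (IH s s').
- by rewrite (IHp s s') ?(IHq s s') // => x x_pq; apply: eq_ss'; rewrite mem_cat x_pq ?orbT.
- by rewrite (IHp s s') ?(IHq s s') // => x x_pq; apply: eq_ss'; rewrite mem_cat x_pq ?orbT.
- by rewrite (IHp s s') ?(IHq s s') // => x x_pq; apply: eq_ss'; rewrite mem_cat x_pq ?orbT.
- by rewrite (IHp s s') ?(IHq s s') // => x x_pq; apply: eq_ss'; rewrite mem_cat x_pq ?orbT.
- by split=> -[a]; exists a; apply/(IH _ _ (eq_in_update eq_ss' a)).
- by split=> sat_p a; apply/(IH _ _ (eq_in_update eq_ss' a)).
Qed.

Lemma sat_ext p s s' : s =1 s' -> sat s p <-> sat s' p.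
Proof. by move=> eq_ss'; apply: sat_coinc => x _. Qed.

Lemma sat_sentence p s s' : sentence p -> sat s p -> sat s' p.
Proof. by move=> p_sent; apply: (sat_coinc (s := s) (s' := s') _).1; rewrite p_sent. Qed.

End Coincidence.

Section Automorphism.
Variables (L : signature) (M : structure L).
Implicit Types (s : nat -> M) (p : formula L).

Definition automorphism (sigma : M -> M) : Prop :=
  [/\ bijective sigma,
      forall f a, sigma (interp_func M f a) = interp_func M f (sigma \o a) &
      forall r a, interp_rel M r a <-> interp_rel M r (sigma \o a)].

Variable sigma : M -> M.
Hypothesis sigma_aut : automorphism sigma.

Lemma teval_automorphism s (t : term L) : teval (sigma \o s) t = sigma (teval s t).
Proof.
case: sigma_aut => _ sigma_func _; elim: t => [//|f args IH] /=.
by rewrite sigma_func; congr interp_func; apply: functional_extensionality.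
Qed.

Lemma sat_automorphism p s : sat s p <-> sat (sigma \o s) p.
Proof.
case: sigma_aut => -[sigma' sigmaK sigma'K] _ sigma_rel.
have upd_comp s' v a : update (sigma \o s') v (sigma a) =1 sigma \o update s' v a.
  by move=> x; rewrite /update /=; case: eqP.
elim: p s => //= [t1 t2|r args|p IH|p IHp q IHq|p IHp q IHq|p IHp q IHq
                 |p IHp q IHq|v p IH|v p IH] s; rewrite ?teval_automorphism.
- by split=> [-> //|/(can_inj sigmaK)].
- suff -> : (fun i => teval (sigma \o s) (args i)) = sigma \o (fun i => teval s (args i)).
    exact: sigma_rel.
  by apply: functional_extensionality => i; rewrite /= teval_automorphism.
- by rewrite IH.
- by rewrite IHp IHq.
- by rewrite IHp IHq.
- by rewrite IHp IHq.
- by rewrite IHp IHq.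
- split=> -[a sat_p]; [exists (sigma a) | exists (sigma' a)].
    by apply/(sat_ext p (upd_comp s v a)); rewrite -IH.
  by rewrite IH; apply/(sat_ext p (upd_comp s v _)); rewrite sigma'K.
- split=> sat_p a; last by rewrite IH; apply/(sat_ext p (upd_comp s v a)).
  by rewrite -(sigma'K a); apply/(sat_ext p (upd_comp s v _)); rewrite -IH.
Qed.

End Automorphism.

Arguments automorphism {L} M sigma.

Section Closure.
Variable L : signature.
Implicit Type p : formula L.

Definition close_all (vs : seq nat) p : formula L := foldr (@fAll L) p vs.

Lemma mem_fv_close_all vs p x :
  (x \in fv (close_all vs p)) = (x \in fv p) && (x \notin vs).
Proof.
elim: vs => [|v vs IH] /=; first by rewrite andbT.
by rewrite mem_filter IH inE negb_or andbCA andbA.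
Qed.

Lemma sentence_close_all p : sentence (close_all (fv p) p).
Proof.
rewrite /sentence; case E: (fv _) => [//|x xs].
have := mem_fv_close_all (fv p) p x; rewrite E inE eqxx.
by case: (x \in fv p).
Qed.

Lemma valid_close_all (M : structure L) vs p :
  (forall s : nat -> M, sat s (close_all vs p)) <-> forall s : nat -> M, sat s p.
Proof.
elim: vs => [//|v vs IH] /=; rewrite -IH; split=> valid s; last by move=> a; apply: valid.
apply: (sat_ext _ _).1 (valid s (s v)) => x.
by rewrite /update; case: eqP => // ->.
Qed.

End Closure.

Section CompleteTheory.
Variables (L : signature) (M : structure L).
Implicit Types (s : nat -> M) (p : formula L).

Definition Th : theory L := fun p => sentence p /\ forall s, sat s p.

Lemma entails_Th p : (forall s, sat s p) -> entails Th p.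
Proof.
move=> valid_p N N_Th s; apply: (valid_close_all N (fv p) p).1 => {s}.
by apply: N_Th; split; [exact: sentence_close_all | apply/valid_close_all].
Qed.

Lemma Th_model : is_model Th M.
Proof. by move=> p []. Qed.

Lemma Th_complete : complete_theory Th.
Proof.
split; first by move=> p [].
split; first by exists M; exact: Th_model.
move=> p p_sent; have [valid_p|] := classic (forall s, sat s p).
  by left; apply: entails_Th.
move=> not_valid; right; apply: entails_Th => s sp; apply: not_valid => s'.
exact: sat_sentence sp.
Qed.

Lemma T_equiv_ThP p q : T_equiv Th p q <-> forall s, sat s p <-> sat s q.
Proof.
split=> [equiv_pq s | equiv_pq]; first exact: equiv_pq Th_model s.
by apply: entails_Th => s /=; apply: equiv_pq.
Qed.

End CompleteTheory.

Section BooleanCombinations.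
Variable L : signature.
Implicit Types (Q : formula L -> Prop) (p q : formula L).

Lemma bool_comb_mono Q Q' q : (forall r, Q r -> Q' r) -> bool_comb Q q -> bool_comb Q' q.
Proof. by move=> QQ'; elim=> *; [apply/bc_base/QQ' | constructor..]. Qed.

Definition big_and (ps : seq (formula L)) : formula L := foldr (@fAnd L) fTrue ps.

Variables (A : eqType) (F : A -> formula L).

Lemma bool_comb_big_and Q (xs : seq A) :
  (forall a, Q (F a)) -> bool_comb Q (big_and (map F xs)).
Proof.
move=> QF; elim: xs => [|a xs IH] /=; first exact: bc_True.
by apply: bc_And => //; apply: bc_base.
Qed.

Lemma sat_big_and (M : structure L) (s : nat -> M) (xs : seq A) :
  sat s (big_and (map F xs)) <-> forall a, a \in xs -> sat s (F a).
Proof.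
elim: xs => [|a xs IH] /=; first by [].
rewrite IH; split=> [[sat_a sat_xs] b|sat_axs].
  by rewrite inE => /predU1P [->|/sat_xs].
by split=> [|b b_xs]; apply: sat_axs; rewrite inE ?eqxx ?b_xs ?orbT.
Qed.

Lemma bool_comb_disj Q (M : structure L) (P : A -> Prop) (xs : seq A) :
  (forall a, bool_comb Q (F a)) ->
  exists q, bool_comb Q q /\
    forall s : nat -> M, sat s q <-> exists2 a, a \in xs & P a /\ sat s (F a).
Proof.
move=> QF; elim: xs => [|a xs [q [Qq sat_q]]].
  by exists fFalse; split=> [|s]; [exact: bc_False | split=> // -[]].
have [Pa | nPa] := classic (P a); [exists (fOr (F a) q) | exists q]; split=> //.
- exact: bc_Or.
- move=> s /=; rewrite sat_q; split=> [[Fa | [b b_xs Fb]] | [b]].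
  + by exists a; rewrite ?mem_head.
  + by exists b; rewrite // inE b_xs orbT.
  + by rewrite inE => /predU1P [-> [_ Fa] | b_xs Fb]; [left | right; exists b].
- move=> s; rewrite sat_q; split=> [[b b_xs Fb] | [b]].
    by exists b; rewrite // inE b_xs orbT.
  by rewrite inE => /predU1P [-> [] | b_xs Fb]; last exists b.
Qed.

End BooleanCombinations.

Lemma bool_comb_sat_agree (L : signature) (M : structure L) (s s' : nat -> M)
    (Q : formula L -> Prop) q :
  (forall r, Q r -> sat s r <-> sat s' r) -> bool_comb Q q -> sat s q <-> sat s' q.
Proof. by move=> agree; elim=> /=; tauto. Qed.

Lemma not_Th_equiv_bool_comb (L : signature) (M : structure L) (s s' : nat -> M)
    (Q : formula L -> Prop) phi :
  (forall r, Q r -> sat s r <-> sat s' r) -> sat s phi -> ~ sat s' phi ->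
  ~ exists q, bool_comb Q q /\ T_equiv (Th M) phi q.
Proof.
move=> agree s_phi s'_phi [q [Qq /T_equiv_ThP phi_q]].
by apply/s'_phi/phi_q/(bool_comb_sat_agree agree Qq)/phi_q.
Qed.

Section EvenFlips.
Variable n : nat.
Local Notation N := n.+1.

Definition point := (bool * 'I_N)%type.

Definition flip (g : 'I_N -> bool) (x : point) : point := (x.1 (+) g x.2, x.2).

Definition even_flip (g : 'I_N -> bool) : bool := ~~ \big[addb/false]_(i < N) g i.

Lemma flipK g : involutive (flip g).
Proof. by case=> b i; rewrite /flip /= -addbA addbb addbF. Qed.

Lemma flip_comp g h x : flip h (flip g x) = flip (fun i => h i (+) g i) x.
Proof. by case: x => b i; rewrite /flip /= -addbA (addbC (g i)). Qed.

Lemma flip0 : flip (fun=> false) =1 id.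
Proof. by case=> b i; rewrite /flip /= addbF. Qed.

Lemma flip_eqE h x y : x.2 = y.2 -> flip h x = y <-> h x.2 = x.1 (+) y.1.
Proof.
case: x y => [b i] [b' i'] /= <-; rewrite /flip /=.
by split=> [[<-]|->]; rewrite ?addKb // addbA addbb.
Qed.

Lemma even_flip0 : even_flip (fun=> false).
Proof. by rewrite /even_flip big1. Qed.

Lemma even_flipD g h : even_flip g -> even_flip h -> even_flip (fun i => g i (+) h i).
Proof. by rewrite /even_flip big_split /= => /negbTE-> /negbTE->. Qed.

Lemma odd_flip1 c : ~~ even_flip (fun i => i == c).
Proof. by rewrite /even_flip negbK (bigD1 c) //= eqxx big1 // => i /negbTE. Qed.

Lemma even_flip_agree_off (c : 'I_N) (delta : 'I_N -> bool) :
  exists2 g, even_flip g & forall i, i != c -> g i = delta i.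
Proof.
pose g i := if i == c then \big[addb/false]_(j < N | j != c) delta j else delta i.
exists g => [|i /negbTE]; last by rewrite /g => ->.
rewrite /even_flip (bigD1 c) //= {1}/g eqxx.
rewrite (eq_bigr delta) => [|i /negbTE]; last by rewrite /g => ->.
by rewrite addbb.
Qed.

Lemma even_flip_trivial g : n = 0 -> even_flip g -> g =1 fun=> false.
Proof.
move=> n0 + i; have val0 (k : 'I_N) : val k = 0.
  by case: k => m /=; rewrite n0 ltnS leqn0 => /eqP.
have ord_i j : j = i by apply/val_inj; rewrite !val0.
rewrite /even_flip (big_pred1 i) => [/negbTE // | j].
by rewrite /= (ord_i j) eqxx.
Qed.

Definition flip_sig : signature :=
  @Signature void (fun f => match f with end) (('I_N -> point) -> Prop) (fun=> N).

Definition flip_struct : structure flip_sig :=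
  @Structure flip_sig point (false, ord0) (fun f => match f with end)
    (fun r a => exists2 g, even_flip g & r (flip g \o a)).

Lemma flip_automorphism g : even_flip g -> automorphism flip_struct (flip g).
Proof.
move=> g_even; split=> [||r a]; [exact/inv_bij/flipK | by case | split].
  case=> h h_even r_ha; exists (fun i => h i (+) g i); first exact: even_flipD.
  congr r: r_ha; apply: functional_extensionality => j; rewrite /= flip_comp.
  by congr flip; apply: functional_extensionality => i; rewrite -addbA addbb addbF.
case=> h h_even r_hga; exists (fun i => h i (+) g i); first exact: even_flipD.
by congr r: r_hga; apply: functional_extensionality => j; rewrite /= flip_comp.
Qed.


Lemma flip_orbit_local m (t u : 'I_m -> point) :
  (forall w : 'I_N -> 'I_m, exists2 h, even_flip h & forall j, flip h (t (w j)) = u (w j)) ->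
  exists2 g, even_flip g & forall k, flip g (t k) = u k.
Proof.
move=> local; have col k : (t k).2 = (u k).2.
  by have [h _ /(_ ord0) <-] := local (fun=> k).
pose d k := (t k).1 (+) (u k).1.
have flipP h k : flip h (t k) = u k <-> h (t k).2 = d k := flip_eqE h (col k).
have d_col k k' : (t k).2 = (t k').2 -> d k = d k'.
  move=> kk'; have [n0 | n_gt0] := posnP n.
    have [h h_even /(_ ord0) /flipP <-] := local (fun=> k).
    have [h' h'_even /(_ ord0) /flipP <-] := local (fun=> k').
    by rewrite !even_flip_trivial.
  have [h _ hP] := local (fun j => if j == ord0 then k else k').
  by move: (hP ord0) (hP (Ordinal (n_gt0 : 1 < N))) => /= /flipP <- /flipP <-; rewrite kk'.
pose delta i := if [pick k | (t k).2 == i] is Some k then d k else false.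
have deltaP k : delta (t k).2 = d k.
  by rewrite /delta; case: pickP => [k' /eqP/d_col // | /(_ k)]; rewrite eqxx.
suff [g g_even g_delta] : exists2 g, even_flip g & forall k, g (t k).2 = delta (t k).2.
  by exists g => // k; apply/flipP; rewrite g_delta deltaP.
have [c c_missed | all_hit] := pickP [pred i | ~~ [exists k, (t k).2 == i]].
  have [g g_even g_delta] := even_flip_agree_off c delta; exists g => // k.
  by apply: g_delta; apply: contraNneq c_missed => tkc; apply/existsP; exists k; rewrite tkc.
have rep_ex i : exists k, (t k).2 == i by apply/existsP/negbFE; apply: all_hit.
have [h h_even hP] := local (fun i => xchoose (rep_ex i)); exists h => // k.
have /eqP rep_col := xchooseP (rep_ex (t k).2).
by move: (hP (t k).2) => /flipP; rewrite rep_col => ->; rewrite -deltaP rep_col.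
Qed.

Definition orbit_atom (V : seq nat) (f : 'I_(size V) -> point) (w : 'I_N -> 'I_(size V)) :
    formula flip_sig :=
  @fRel flip_sig (fun a => a = f \o w) (fun j => tvar (nth 0 V (w j))).

Lemma sat_orbit_atom V f w (s : nat -> flip_struct) :
  sat s (@orbit_atom V f w) <->
  exists2 h, even_flip h & forall j, flip h (s (nth 0 V (w j))) = f (w j).
Proof.
split=> -[h h_even hP]; exists h => //; first by move=> j; have /= := congr1 (@^~ j) hP.
exact: functional_extensionality.
Qed.

Lemma nfv_orbit_atom V f w : nfv (@orbit_atom V f w) <= N.
Proof.
have size_vars : size [seq nth 0 V (w j) | j <- enum 'I_N] = N.
  by rewrite size_map size_enum_ord.
rewrite /nfv -[X in _ <= X]size_vars.
apply: uniq_leq_size (undup_uniq _) _ => v; rewrite mem_undup.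
by case/flatten_mapP=> j _; rewrite inE => /eqP->; apply: map_f; rewrite mem_enum.
Qed.

Definition orbit_diagram (V : seq nat) (f : 'I_(size V) -> point) : formula flip_sig :=
  big_and [seq orbit_atom f w | w : {ffun 'I_N -> 'I_(size V)} <- enum {ffun 'I_N -> 'I_(size V)}].

Lemma bool_comb_orbit_diagram V f : bool_comb (fun r => nfv r <= N) (@orbit_diagram V f).
Proof. by apply: bool_comb_big_and => w; apply: nfv_orbit_atom. Qed.

Lemma sat_orbit_diagram V f (s : nat -> flip_struct) :
  sat s (@orbit_diagram V f) <->
  exists2 g, even_flip g & forall k : 'I_(size V), flip g (s (nth 0 V k)) = f k.
Proof.
rewrite /orbit_diagram sat_big_and; split=> [all_atoms | [g g_even gP] w _].
  apply: flip_orbit_local => w.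
  have /sat_orbit_atom [h h_even hP] := all_atoms [ffun j => w j] (mem_enum _ _).
  by exists h => // j; have := hP j; rewrite ffunE.
by apply/sat_orbit_atom; exists g.
Qed.

Definition realizes (p : formula flip_sig) (f : {ffun 'I_(size (fv p)) -> point}) : Prop :=
  exists2 s : nat -> flip_struct, sat s p & forall k : 'I_(size (fv p)), s (nth 0 (fv p) k) = f k.
Arguments realizes : clear implicits.

Lemma sat_orbit_diagrams p (s : nat -> flip_struct) :
  sat s p <-> exists f : {ffun 'I_(size (fv p)) -> point},
    realizes p f /\ sat s (orbit_diagram f).
Proof.
split=> [sp | [f [[s' s'p s'f] /sat_orbit_diagram [g g_even gP]]]].
  exists [ffun k : 'I_(size (fv p)) => s (nth 0 (fv p) k)].
  split; first by exists s => // k; rewrite ffunE.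
  by apply/sat_orbit_diagram; exists (fun=> false) => [|k]; rewrite ?even_flip0 ?flip0 ?ffunE.
apply/(sat_automorphism (flip_automorphism g_even)); apply: (sat_coinc _).1 s'p => v vp.
have v_idx : index v (fv p) < size (fv p) by rewrite index_mem.
by have := gP (Ordinal v_idx); rewrite -s'f /= nth_index.
Qed.

Lemma flip_bool_comb p :
  exists2 q, bool_comb (fun r => nfv r <= N) q & T_equiv (Th flip_struct) p q.
Proof.
have [q [Qq sat_q]] := bool_comb_disj flip_struct (realizes p)
  (enum {ffun 'I_(size (fv p)) -> point}) (@bool_comb_orbit_diagram (fv p)).
exists q => //; apply/T_equiv_ThP => s; rewrite sat_q sat_orbit_diagrams.
by split=> [[f f_p] | [f _ f_p]]; [exists f; rewrite ?mem_enum | exists f].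
Qed.

Definition base : nat -> flip_struct := fun v => (false, inord v).

Definition base_flipped : nat -> flip_struct := flip (fun i => i == ord0) \o base.

Definition diag_atom : formula flip_sig :=
  @fRel flip_sig (fun a => a = fun j => (false, j)) (fun j => tvar j).

Lemma sat_diag_atom_base : sat base diag_atom.
Proof.
exists (fun=> false); first exact: even_flip0.
by apply: functional_extensionality => j; rewrite /= flip0 /base inord_val.
Qed.

Lemma not_sat_diag_atom_base_flipped : ~ sat base_flipped diag_atom.
Proof.
case=> h h_even /(congr1 (fun a j => (a j).1)) h_odd.
suff h_e0 : h = fun i => i == ord0 by move: h_even; rewrite h_e0 (negbTE (odd_flip1 _)).
apply: functional_extensionality => i; have := congr1 (@^~ i) h_odd.
by rewrite /= inord_val; case: (h i); case: (i == ord0).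
Qed.

Lemma exists_col_notin (vs : seq nat) :
  size (undup vs) <= n -> exists c : 'I_N, forall v, v \in vs -> inord v != c.
Proof.
move=> size_vs.
have [c /allP c_free | all_hit] := pickP [pred c : 'I_N | all (fun v => inord v != c) vs].
  by exists c.
suff : N <= size [seq inord v : 'I_N | v <- undup vs] by rewrite size_map ltnNge size_vs.
rewrite -[X in X <= _](size_enum_ord N); apply: uniq_leq_size (enum_uniq _) _ => c _.
have /negbT /allPn [v vs_v /negPn /eqP <-] := all_hit c.
by apply: map_f; rewrite mem_undup.
Qed.

Lemma base_flipped_agree r : nfv r <= n \/ var_eq r -> sat base r <-> sat base_flipped r.
Proof.
case=> [small | [x [y ->]]]; last first.
  by rewrite /= /base_flipped /=; split=> [-> // | /(can_inj (flipK _))].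
have [c c_free] := exists_col_notin small.
pose g i := (i == ord0) (+) (i == c).
have g_even : even_flip g.
  by rewrite /even_flip big_split /= (negbNE (odd_flip1 ord0)) (negbNE (odd_flip1 c)).
rewrite (sat_automorphism (flip_automorphism g_even)); apply: sat_coinc => v rv.
by rewrite /= /flip /g /= (negbTE (c_free v rv)) addbF.
Qed.

Lemma not_Th_equiv_diag_atom (Q : formula flip_sig -> Prop) :
  (forall r, Q r -> nfv r <= n \/ var_eq r) ->
  ~ exists q, bool_comb Q q /\ T_equiv (Th flip_struct) diag_atom q.
Proof.
move=> Q_small; apply: not_Th_equiv_bool_comb sat_diag_atom_base not_sat_diag_atom_base_flipped.
by move=> r /Q_small; exact: base_flipped_agree.
Qed.

End EvenFlips.

Lemma flip_nary n : nary_theory (Th (flip_struct n)) n.+1.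
Proof.
case: n => [|n] p; have [q Qq pq] := flip_bool_comb p; exists q; split=> //.
by apply: bool_comb_mono Qq => r; left.
Qed.

Lemma flip_not_nary n : ~ nary_theory (Th (flip_struct n)) n.
Proof.
case: n => [|[|n]] nary.
- have [q [q_sent pq]] := nary (diag_atom _).
  apply: (@not_Th_equiv_diag_atom 0 (@sentence _)); last by exists q; split; first exact: bc_base.
  by move=> r r_sent; left; rewrite /nfv r_sent.
- exact: not_Th_equiv_diag_atom (nary (diag_atom _)).
- by apply: not_Th_equiv_diag_atom (nary (diag_atom _)) => r; left.
Qed.

Theorem corollary1p7 :
  forall n : nat, 1 <= n ->
    exists (L : signature) (T : theory L), complete_theory T /\ arity_is T n.
Proof.
case=> [//|n] _; exists (flip_sig n), (Th (flip_struct n)).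
by split; [exact: Th_complete | split; [exact: flip_nary | exact: flip_not_nary]].
Qed.
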